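(* In the two-tier residency matching game described in the context, under the large market approximation, let $X\in[0,K]$ be the expected number of high hospitals listed by a high doctor under a symmetric strategy of the high doctors, and let $p(X,r)$ (resp. $p'(X,r)$) be the probability that a single application of a high doctor to a high (resp. low) hospital is accepted. Then $p(X,r)$ is strictly decreasing in $X$ for all $r>0$, and $p'(X,r)$ is strictly increasing in $X$.
   Context: Model: there are $n$ high-tier and $rn$ low-tier doctors ($r>0$), and $n$ high-tier and $rn$ low-tier hospitals, each with one position. Every hospital prefers every high doctor to every low doctor and every doctor prefers every high hospital to every low hospital; within a tier, preferences are independent uniformly random permutations. Each doctor submits a ranked list of exactly $K$ hospitals; hospitals submit full true rankings; doctor-proposing deferred acceptance is run. A doctor's pure strategy $(k,K-k)$ lists his $k$ most preferred high hospitals followed by his $K-k$ most preferred low hospitals; a symmetric strategy of high doctors in which a fraction $x$ play $(k+1,K-k-1)$ and $1-x$ play $(k,K-k)$ is summarized by $X=k+x$. Large market approximation: as $n\to\infty$ with $r,K$ fixed, each application of a high doctor to a high (low) hospital is accepted independently with probability $p$ ($p'$), these probabilities being determined by fixed-point equations stating that the expected number of matched doctors equals the expected number of hospitals receiving at least one application, where a hospital receiving on average $\lambda$ applications gets none with probability $e^{-\lambda}$ (e.g. if all high doctors list $k$ high hospitals, $(1-p)^k=e^{-(1-(1-p)^k)/p}$). *)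

From Stdlib Require Import Reals Lra Lia.
Open Scope R_scope.

(* Symmetric strategy of high doctors X = k + x, 0 <= x < 1:
   fraction (1-x) plays (k, K-k), fraction x plays (k+1, K-k-1). *)

(* Expected fraction of high doctors matched to a high hospital, when every
   application of a high doctor to a high hospital is accepted w.p. p. *)
Definition matched_high (k : nat) (x p : R) : R :=
  (1 - x) * (1 - (1 - p) ^ k) + x * (1 - (1 - p) ^ (S k)).

(* Fixed-point equation for high hospitals: expected number of matched
   (high doctor, high hospital) pairs = expected number of high hospitals
   receiving >= 1 application; the mean number of applications per high
   hospital is matched_high / p. (Everything divided by n.) *)
Definition high_eq (k : nat) (x p : R) : Prop :=
  matched_high k x p = 1 - exp (- (matched_high k x p / p)).

(* Expected number (divided by n) of high doctors matched to low hospitals,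
   where each application to a low hospital is accepted w.p. q. *)
Definition matched_low (K k : nat) (x p q : R) : R :=
  (1 - x) * (1 - p) ^ k * (1 - (1 - q) ^ (K - k))
  + x * (1 - p) ^ (S k) * (1 - (1 - q) ^ (K - k - 1)).

(* Fixed-point equation for the r n low hospitals; mean number of
   applications of high doctors per low hospital is matched_low / (r q). *)
Definition low_eq (K k : nat) (r x p q : R) : Prop :=
  matched_low K k x p q = r * (1 - exp (- (matched_low K k x p q / (r * q)))).

(* At X = 0 there are no such applications and the
   fixed-point equation is degenerate; we use the continuous extension p = 1. *)
Definition is_p_high (K : nat) (X p : R) : Prop :=
  0 < p <= 1 /\
  exists (k : nat) (x : R),
    X = INR k + x /\ 0 <= x < 1 /\ (k <= K)%nat /\
    high_eq k x p /\ (X = 0 -> p = 1).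

(* q is p'(X, r) given p = p(X, r).  At X = K no high doctor applies to a low
   hospital; we use the continuous extension p' = 1. *)
Definition is_p_low (K : nat) (r X p q : R) : Prop :=
  0 < q <= 1 /\
  exists (k : nat) (x : R),
    X = INR k + x /\ 0 <= x < 1 /\ (k <= K)%nat /\
    low_eq K k r x p q /\ (X = INR K -> q = 1).

(* Let [mu] be the mean number of applications a hospital receives.  The
   fixed-point equation says that the matched mass is [c (1 - e^-mu)] and that
   an application is accepted with probability [(1 - e^-mu) / mu], which
   decreases in [mu]: a larger matched mass forces a smaller acceptance
   probability.  Raising [X] lowers, at fixed [p], the probability
   [all_rejected] that a high doctor is turned down by all his high hospitals.
   So if the high matched mass did not rise, [p] would not fall and the mass
   would rise after all; hence the mass rises and [p] falls.  Then fewer high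
   doctors reach the low tier, with fewer low hospitals left on their lists;
   if [p'] did not rise, the low matched mass would fall, forcing [p'] up. *)

From Stdlib Require Import Reals Lra Lia.
Open Scope R_scope.

Definition accept_ratio (mu : R) : R := (1 - exp (- mu)) / mu.

Lemma one_minus_exp_neg_lt a : a <> 0 -> 1 - exp (- a) < a.
Proof. intros ha. pose proof (exp_ineq1 (- a) ltac:(lra)). lra. Qed.

Lemma mul_exp_neg_lt a : 0 < a -> a * exp (- a) < 1 - exp (- a).
Proof.
  intros ha.
  assert (hinv : exp (- a) * exp a = 1) by (rewrite <- exp_plus, Rplus_opp_l; apply exp_0).
  pose proof (exp_pos (- a)).
  pose proof (exp_ineq1 a ltac:(lra)).
  nra.
Qed.

Lemma accept_ratio_lt_1 mu : 0 < mu -> accept_ratio mu < 1.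
Proof.
  intros hmu. unfold accept_ratio.
  pose proof (one_minus_exp_neg_lt mu ltac:(lra)).
  apply (Rmult_lt_reg_r mu); [lra|].
  replace ((1 - exp (- mu)) / mu * mu) with (1 - exp (- mu)) by (field; lra).
  lra.
Qed.

Lemma accept_ratio_decreasing a b : 0 < a < b -> accept_ratio b < accept_ratio a.
Proof.
  intros [ha hab]. unfold accept_ratio.
  assert (hsplit : exp (- b) = exp (- a) * exp (- (b - a)))
    by (rewrite <- exp_plus; f_equal; ring).
  pose proof (exp_pos (- a)).
  pose proof (one_minus_exp_neg_lt (b - a) ltac:(lra)).
  pose proof (mul_exp_neg_lt a ha).
  assert (0 < a * exp (- a)) by (apply Rmult_lt_0_compat; lra).
  assert (key : a * (1 - exp (- b)) < b * (1 - exp (- a))) by (rewrite hsplit; nra).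
  apply (Rmult_lt_reg_r (a * b)); [nra|].
  replace ((1 - exp (- b)) / b * (a * b)) with (a * (1 - exp (- b))) by (field; lra).
  replace ((1 - exp (- a)) / a * (a * b)) with (b * (1 - exp (- a))) by (field; lra).
  exact key.
Qed.

(* [high_eq] is [acceptance_eq 1 p] and [low_eq] is [acceptance_eq r q]. *)
Definition acceptance_eq (c p m : R) : Prop := m = c * (1 - exp (- (m / (c * p)))).

Lemma acceptance_eq_ratio c p m : 0 < c -> 0 < p -> 0 < m -> acceptance_eq c p m ->
  0 < m / (c * p) /\ exp (- (m / (c * p))) = 1 - m / c /\ p = accept_ratio (m / (c * p)).
Proof.
  intros hc hp hm he.
  assert (hmu : 0 < m / (c * p)) by (apply Rdiv_lt_0_compat; nra).
  assert (hexp : exp (- (m / (c * p))) = 1 - m / c).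
  { unfold acceptance_eq in he. set (E := exp _) in *.
    replace (m / c) with (1 - E) by (rewrite he; field; lra). ring. }
  repeat split; [exact hmu | exact hexp |].
  unfold accept_ratio. rewrite hexp. field. split; lra.
Qed.

Lemma acceptance_lt_1 c p m : 0 < c -> 0 < p -> 0 < m -> acceptance_eq c p m -> p < 1.
Proof.
  intros hc hp hm he.
  destruct (acceptance_eq_ratio c p m hc hp hm he) as [hmu [_ ->]].
  exact (accept_ratio_lt_1 _ hmu).
Qed.

Lemma acceptance_lt_of_matched_lt c p1 p2 m1 m2 :
  0 < c -> 0 < p1 -> 0 < p2 -> 0 < m1 -> 0 < m2 ->
  acceptance_eq c p1 m1 -> acceptance_eq c p2 m2 -> m1 < m2 -> p2 < p1.
Proof.
  intros hc hp1 hp2 hm1 hm2 he1 he2 hm.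
  destruct (acceptance_eq_ratio c p1 m1 hc hp1 hm1 he1) as [hmu1 [hexp1 hr1]].
  destruct (acceptance_eq_ratio c p2 m2 hc hp2 hm2 he2) as [_ [hexp2 hr2]].
  rewrite hr1, hr2. apply accept_ratio_decreasing. split; [exact hmu1|].
  assert (m1 / c < m2 / c) by (apply Rmult_lt_compat_r; [apply Rinv_0_lt_compat|]; lra).
  apply Ropp_lt_cancel, exp_lt_inv. lra.
Qed.

Lemma acceptance_le_of_matched_le c p1 p2 m1 m2 :
  0 < c -> 0 < p1 -> 0 < p2 -> 0 < m1 -> 0 < m2 ->
  acceptance_eq c p1 m1 -> acceptance_eq c p2 m2 -> m1 <= m2 -> p2 <= p1.
Proof.
  intros hc hp1 hp2 hm1 hm2 he1 he2 [hm | <-].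
  - left. exact (acceptance_lt_of_matched_lt c p1 p2 m1 m2 hc hp1 hp2 hm1 hm2 he1 he2 hm).
  - destruct (acceptance_eq_ratio c p1 m1 hc hp1 hm1 he1) as [_ [hexp1 hr1]].
    destruct (acceptance_eq_ratio c p2 m1 hc hp2 hm2 he2) as [_ [hexp2 hr2]].
    assert (hmu : m1 / (c * p1) = m1 / (c * p2)).
    { apply Ropp_eq_reg, exp_inv. lra. }
    rewrite hr1, hr2, hmu. lra.
Qed.

Lemma INR_succ_le k1 k2 : (k1 < k2)%nat -> INR k1 + 1 <= INR k2.
Proof. intros hk. rewrite <- S_INR. apply le_INR. exact hk. Qed.

Lemma int_frac_lt k1 x1 k2 x2 : 0 <= x1 < 1 -> 0 <= x2 < 1 ->
  INR k1 + x1 < INR k2 + x2 -> (k1 < k2)%nat \/ (k1 = k2 /\ x1 < x2).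
Proof.
  intros hx1 hx2 hX.
  destruct (Nat.lt_trichotomy k1 k2) as [hk | [<- | hk]].
  - left. exact hk.
  - right. split; [reflexivity | lra].
  - pose proof (INR_succ_le k2 k1 hk). lra.
Qed.

Lemma int_frac_lt_INR k x n : 0 <= x < 1 -> INR k + x < INR n -> (k < n)%nat.
Proof.
  intros hx hX.
  destruct (int_frac_lt k x n 0 hx ltac:(lra) ltac:(lra)) as [hk | [_ hx0]]; [exact hk | lra].
Qed.

Lemma int_frac_unique k1 x1 k2 x2 : 0 <= x1 < 1 -> 0 <= x2 < 1 ->
  INR k1 + x1 = INR k2 + x2 -> k1 = k2 /\ x1 = x2.
Proof.
  intros hx1 hx2 hX.
  destruct (Nat.lt_trichotomy k1 k2) as [hk | [<- | hk]].
  - pose proof (INR_succ_le k1 k2 hk). lra.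
  - split; [reflexivity | lra].
  - pose proof (INR_succ_le k2 k1 hk). lra.
Qed.

Lemma pow_le_pow_le_1 t m n : 0 <= t <= 1 -> (m <= n)%nat -> t ^ n <= t ^ m.
Proof.
  intros ht hmn. replace n with (m + (n - m))%nat by lia. rewrite pow_add.
  pose proof (pow_le t m ltac:(lra)).
  pose proof (pow_incr t 1 (n - m) ltac:(lra)) as hle. rewrite pow1 in hle.
  nra.
Qed.

Definition all_rejected (k : nat) (x s : R) : R := (1 - x) * s ^ k + x * s ^ S k.

Lemma matched_high_all_rejected k x p : matched_high k x p = 1 - all_rejected k x (1 - p).
Proof. unfold matched_high, all_rejected. ring. Qed.

Lemma all_rejected_ge0 k x s : 0 <= x <= 1 -> 0 <= s -> 0 <= all_rejected k x s.
Proof.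
  intros hx hs. unfold all_rejected.
  pose proof (pow_le s k hs). pose proof (pow_le s (S k) hs). nra.
Qed.

Lemma all_rejected_le k x s s' : 0 <= x <= 1 -> 0 <= s <= s' ->
  all_rejected k x s <= all_rejected k x s'.
Proof.
  intros hx hs. unfold all_rejected.
  pose proof (pow_incr s s' k hs). pose proof (pow_incr s s' (S k) hs). nra.
Qed.

Lemma all_rejected_lt_1 k x s : 0 <= x < 1 -> 0 < INR k + x -> 0 <= s < 1 ->
  all_rejected k x s < 1.
Proof.
  intros hx hX hs. unfold all_rejected.
  destruct k as [| k].
  - simpl in *. nra.
  - pose proof (pow_lt_1_compat s (S k) hs ltac:(lia)).
    pose proof (pow_lt_1_compat s (S (S k)) hs ltac:(lia)).
    nra.
Qed.

Lemma all_rejected_lt k1 x1 k2 x2 s : 0 <= x1 < 1 -> 0 <= x2 < 1 -> 0 < s < 1 ->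
  INR k1 + x1 < INR k2 + x2 -> all_rejected k2 x2 s < all_rejected k1 x1 s.
Proof.
  intros hx1 hx2 hs hX. unfold all_rejected. simpl.
  destruct (int_frac_lt k1 x1 k2 x2 hx1 hx2 hX) as [hk | [<- hx]].
  - pose proof (pow_le_pow_le_1 s (S k1) k2 ltac:(lra) hk) as hpow. simpl in hpow.
    pose proof (pow_lt s k1 ltac:(lra)). pose proof (pow_lt s k2 ltac:(lra)).
    assert (0 <= x2 * s ^ k2 * (1 - s)) by (apply Rmult_le_pos; nra).
    assert (0 < (1 - x1) * s ^ k1 * (1 - s)) by (apply Rmult_lt_0_compat; [apply Rmult_lt_0_compat|]; lra).
    nra.
  - pose proof (pow_lt s k1 ltac:(lra)).
    assert (0 < (x2 - x1) * s ^ k1 * (1 - s)) by (apply Rmult_lt_0_compat; [apply Rmult_lt_0_compat|]; lra).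
    nra.
Qed.

Lemma high_eq_acceptance k x p : high_eq k x p -> acceptance_eq 1 p (matched_high k x p).
Proof. unfold high_eq, acceptance_eq. rewrite !Rmult_1_l. trivial. Qed.

Lemma matched_high_pos k x p : 0 <= x < 1 -> 0 < INR k + x -> 0 < p <= 1 ->
  0 < matched_high k x p.
Proof.
  intros hx hX hp. rewrite matched_high_all_rejected.
  pose proof (all_rejected_lt_1 k x (1 - p) hx hX ltac:(lra)). lra.
Qed.

Lemma high_acceptance_lt_1 k x p : 0 <= x < 1 -> 0 < INR k + x -> 0 < p <= 1 ->
  high_eq k x p -> p < 1.
Proof.
  intros hx hX hp he.
  apply (acceptance_lt_1 1 p (matched_high k x p)); try lra.
  - exact (matched_high_pos k x p hx hX hp).
  - exact (high_eq_acceptance k x p he).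
Qed.

Lemma matched_low_split_le K k x p q : matched_low K k x p q =
  (1 - (1 - q) ^ (K - k)) * all_rejected k x (1 - p)
  - ((1 - q) ^ (K - k - 1) - (1 - q) ^ (K - k)) * (x * (1 - p) ^ S k).
Proof. unfold matched_low, all_rejected. ring. Qed.

Lemma matched_low_split_ge K k x p q : matched_low K k x p q =
  (1 - (1 - q) ^ (K - k - 1)) * all_rejected k x (1 - p)
  + ((1 - q) ^ (K - k - 1) - (1 - q) ^ (K - k)) * ((1 - x) * (1 - p) ^ k).
Proof. unfold matched_low, all_rejected. ring. Qed.

Lemma pow_sub_succ_le t K k : 0 <= t <= 1 -> t ^ (K - k) <= t ^ (K - k - 1).
Proof. intros ht. apply pow_le_pow_le_1; [exact ht | lia]. Qed.

Lemma matched_low_pos K k x p q : (k < K)%nat -> 0 <= x < 1 -> p <= 1 ->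
  0 < (1 - p) ^ k -> 0 < q <= 1 -> 0 < matched_low K k x p q.
Proof.
  intros hk hx hp hs hq. unfold matched_low.
  pose proof (pow_lt_1_compat (1 - q) (K - k) ltac:(lra) ltac:(lia)).
  pose proof (pow_incr (1 - q) 1 (K - k - 1) ltac:(lra)) as hle. rewrite pow1 in hle.
  pose proof (pow_le (1 - p) (S k) ltac:(lra)).
  assert (0 < (1 - x) * (1 - p) ^ k * (1 - (1 - q) ^ (K - k)))
    by (apply Rmult_lt_0_compat; [apply Rmult_lt_0_compat|]; lra).
  assert (0 <= x * (1 - p) ^ S k * (1 - (1 - q) ^ (K - k - 1)))
    by (apply Rmult_le_pos; [apply Rmult_le_pos|]; lra).
  lra.
Qed.

Lemma matched_low_le_q K k x p q q' : 0 <= x <= 1 -> p <= 1 -> q <= q' <= 1 ->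
  matched_low K k x p q <= matched_low K k x p q'.
Proof.
  intros hx hp hq. unfold matched_low.
  pose proof (pow_incr (1 - q') (1 - q) (K - k) ltac:(lra)).
  pose proof (pow_incr (1 - q') (1 - q) (K - k - 1) ltac:(lra)).
  pose proof (pow_le (1 - p) k ltac:(lra)). pose proof (pow_le (1 - p) (S k) ltac:(lra)).
  assert (0 <= (1 - x) * (1 - p) ^ k) by (apply Rmult_le_pos; lra).
  assert (0 <= x * (1 - p) ^ S k) by (apply Rmult_le_pos; lra).
  nra.
Qed.

Lemma matched_low_lt_of_lt_nat K k1 k2 x1 x2 p1 p2 q1 q2 : (k1 < k2 < K)%nat ->
  0 <= x1 <= 1 -> 0 <= x2 <= 1 -> p1 <= 1 -> p2 <= 1 -> 0 < q1 <= 1 -> 0 <= q2 <= q1 ->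
  all_rejected k2 x2 (1 - p2) < all_rejected k1 x1 (1 - p1) ->
  matched_low K k2 x2 p2 q2 < matched_low K k1 x1 p1 q1.
Proof.
  intros hk hx1 hx2 hp1 hp2 hq1 hq2 hg.
  pose proof (all_rejected_ge0 k2 x2 (1 - p2) hx2 ltac:(lra)).
  assert (ht1 : (1 - q1) ^ (K - k1 - 1) < 1) by (apply pow_lt_1_compat; [lra | lia]).
  assert (ht : (1 - q1) ^ (K - k1 - 1) <= (1 - q2) ^ (K - k2)).
  { apply (Rle_trans _ ((1 - q1) ^ (K - k2))).
    - apply pow_le_pow_le_1; [lra | lia].
    - apply pow_incr; lra. }
  rewrite (matched_low_split_le K k2), (matched_low_split_ge K k1).
  pose proof (pow_sub_succ_le (1 - q1) K k1 ltac:(lra)).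
  pose proof (pow_sub_succ_le (1 - q2) K k2 ltac:(lra)).
  pose proof (pow_le (1 - p1) k1 ltac:(lra)). pose proof (pow_le (1 - p2) (S k2) ltac:(lra)).
  assert (0 <= x2 * (1 - p2) ^ S k2) by (apply Rmult_le_pos; lra).
  assert (0 <= (1 - x1) * (1 - p1) ^ k1) by (apply Rmult_le_pos; lra).
  nra.
Qed.

Lemma matched_low_lt_of_lt_frac K k x1 x2 p1 p2 q1 q2 : (k < K)%nat ->
  0 <= x1 <= x2 -> x2 <= 1 -> p2 <= p1 <= 1 -> 0 < q1 <= 1 -> q2 <= q1 ->
  all_rejected k x2 (1 - p2) < all_rejected k x1 (1 - p1) ->
  matched_low K k x2 p2 q2 < matched_low K k x1 p1 q1.
Proof.
  intros hk hx hx2 hp hq1 hq2 hg.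
  apply (Rle_lt_trans _ (matched_low K k x2 p2 q1)).
  { apply matched_low_le_q; lra. }
  rewrite !(matched_low_split_le K k).
  assert (ht : (1 - q1) ^ (K - k) < 1) by (apply pow_lt_1_compat; [lra | lia]).
  pose proof (pow_sub_succ_le (1 - q1) K k ltac:(lra)).
  assert (x1 * (1 - p1) ^ S k <= x2 * (1 - p2) ^ S k).
  { apply Rmult_le_compat; try lra.
    - apply pow_le. lra.
    - apply pow_incr. lra. }
  nra.
Qed.

Section TwoStrategies.

Variables (k1 k2 : nat) (x1 x2 p1 p2 : R).
Hypotheses (hx1 : 0 <= x1 < 1) (hx2 : 0 <= x2 < 1).
Hypothesis hX : INR k1 + x1 < INR k2 + x2.
Hypotheses (hp1 : 0 < p1 <= 1) (hp2 : 0 < p2 <= 1).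
Hypotheses (he1 : high_eq k1 x1 p1) (he2 : high_eq k2 x2 p2).
Hypothesis hp1_0 : INR k1 + x1 = 0 -> p1 = 1.

Lemma X1_eq_0 : INR k1 + x1 = 0 -> k1 = 0%nat /\ x1 = 0.
Proof. intros h0. apply (int_frac_unique k1 x1 0 0 hx1); simpl; lra. Qed.

Lemma X1_pos : INR k1 + x1 <> 0 -> 0 < INR k1 + x1.
Proof. pose proof (pos_INR k1). lra. Qed.

Lemma X2_pos : 0 < INR k2 + x2.
Proof. pose proof (pos_INR k1). lra. Qed.

Lemma p1_lt_1 : INR k1 + x1 <> 0 -> p1 < 1.
Proof. intros h0. exact (high_acceptance_lt_1 k1 x1 p1 hx1 (X1_pos h0) hp1 he1). Qed.

Lemma p2_lt_1 : p2 < 1.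
Proof. exact (high_acceptance_lt_1 k2 x2 p2 hx2 X2_pos hp2 he2). Qed.

Lemma all_rejected_high_lt : all_rejected k2 x2 (1 - p2) < all_rejected k1 x1 (1 - p1).
Proof.
  pose proof X2_pos.
  destruct (Req_dec (INR k1 + x1) 0) as [h0 | h0].
  - rewrite (hp1_0 h0). destruct (X1_eq_0 h0) as [-> ->].
    replace (all_rejected 0 0 (1 - 1)) with 1 by (unfold all_rejected; simpl; ring).
    apply all_rejected_lt_1; lra.
  - pose proof (X1_pos h0). pose proof (p1_lt_1 h0).
    apply Rnot_le_lt. intros hle.
    assert (hp : p1 <= p2).
    { apply (acceptance_le_of_matched_le 1 p2 p1 (matched_high k2 x2 p2) (matched_high k1 x1 p1));
        try lra; auto using matched_high_pos, high_eq_acceptance.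
      rewrite !matched_high_all_rejected. lra. }
    pose proof (all_rejected_le k2 x2 (1 - p2) (1 - p1) ltac:(lra) ltac:(lra)).
    pose proof (all_rejected_lt k1 x1 k2 x2 (1 - p1) hx1 hx2 ltac:(lra) hX).
    lra.
Qed.

Lemma high_acceptance_lt : p2 < p1.
Proof.
  destruct (Req_dec (INR k1 + x1) 0) as [h0 | h0].
  - rewrite (hp1_0 h0). exact p2_lt_1.
  - pose proof (X1_pos h0). pose proof X2_pos. pose proof all_rejected_high_lt.
    apply (acceptance_lt_of_matched_lt 1 p1 p2 (matched_high k1 x1 p1) (matched_high k2 x2 p2));
      try lra; auto using matched_high_pos, high_eq_acceptance.
    rewrite !matched_high_all_rejected. lra.
Qed.

Lemma rejection_pow_pos : 0 < (1 - p1) ^ k1.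
Proof.
  destruct (Req_dec (INR k1 + x1) 0) as [h0 | h0].
  - destruct (X1_eq_0 h0) as [-> _]. simpl. lra.
  - apply pow_lt. pose proof (p1_lt_1 h0). lra.
Qed.

Variables (K : nat) (r q1 q2 : R).
Hypothesis hr : 0 < r.
Hypotheses (hq1 : 0 < q1 <= 1) (hq2 : 0 < q2 <= 1).
Hypotheses (hl1 : low_eq K k1 r x1 p1 q1) (hl2 : low_eq K k2 r x2 p2 q2).
Hypothesis hXK : INR k2 + x2 <= INR K.
Hypothesis hq2_K : INR k2 + x2 = INR K -> q2 = 1.

Lemma matched_low_lt : INR k2 + x2 < INR K -> q2 <= q1 ->
  matched_low K k2 x2 p2 q2 < matched_low K k1 x1 p1 q1.
Proof.
  intros hX2 hq.
  pose proof (int_frac_lt_INR k2 x2 K hx2 hX2).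
  pose proof high_acceptance_lt. pose proof all_rejected_high_lt.
  destruct (int_frac_lt k1 x1 k2 x2 hx1 hx2 hX) as [hk | [<- hx]].
  - apply matched_low_lt_of_lt_nat; lra || lia.
  - apply matched_low_lt_of_lt_frac; lra || lia.
Qed.

Lemma low_acceptance_lt : q1 < q2.
Proof.
  destruct (Req_dec (INR k2 + x2) (INR K)) as [hX2 | hX2].
  - rewrite (hq2_K hX2).
    apply (acceptance_lt_1 r q1 (matched_low K k1 x1 p1 q1)); try lra; [|exact hl1].
    apply matched_low_pos; try lra.
    + apply (int_frac_lt_INR k1 x1 K hx1). lra.
    + exact rejection_pow_pos.
  - assert (hX2K : INR k2 + x2 < INR K) by lra.
    apply Rnot_le_lt. intros hq.
    pose proof (matched_low_lt hX2K hq) as hm.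
    assert (hm2 : 0 < matched_low K k2 x2 p2 q2).
    { pose proof p2_lt_1.
      apply matched_low_pos; try lra.
      + exact (int_frac_lt_INR k2 x2 K hx2 hX2K).
      + apply pow_lt. lra. }
    assert (q1 < q2).
    { apply (acceptance_lt_of_matched_lt r q2 q1
        (matched_low K k2 x2 p2 q2) (matched_low K k1 x1 p1 q1)); trivial; lra. }
    lra.
Qed.

End TwoStrategies.

Theorem claim1 :
  forall (K : nat) (r : R), 0 < r ->
  forall X1 X2 p1 p2 q1 q2 : R,
    0 <= X1 -> X1 < X2 -> X2 <= INR K ->
    is_p_high K X1 p1 -> is_p_high K X2 p2 ->
    is_p_low K r X1 p1 q1 -> is_p_low K r X2 p2 q2 ->
    p2 < p1 /\ q1 < q2.
Proof.
  intros K r hr X1 X2 p1 p2 q1 q2 _ hX hXK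
    [hp1 [k1 [x1 [-> [hx1 [_ [he1 hp1_0]]]]]]]
    [hp2 [k2 [x2 [-> [hx2 [_ [he2 _]]]]]]]
    [hq1 [k1' [x1' [hX1' [hx1' [_ [hl1 _]]]]]]]
    [hq2 [k2' [x2' [hX2' [hx2' [_ [hl2 hq2_K]]]]]]].
  destruct (int_frac_unique k1 x1 k1' x1' hx1 hx1' hX1') as [<- <-].
  destruct (int_frac_unique k2 x2 k2' x2' hx2 hx2' hX2') as [<- <-].
  split.
  - exact (high_acceptance_lt k1 k2 x1 x2 p1 p2 hx1 hx2 hX hp1 hp2 he1 he2 hp1_0).
  - exact (low_acceptance_lt k1 k2 x1 x2 p1 p2 hx1 hx2 hX hp1 hp2 he1 he2 hp1_0
      K r q1 q2 hr hq1 hq2 hl1 hl2 hXK hq2_K).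
Qed.
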